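(* Let $\rho$ be a qubit state and define the concatenation protocol as follows. Set $\sigma_{(0)}=\rho$. Given $\sigma_{(m)}$ with $p^{(m)}_{00}=\langle0|\sigma_{(m)}|0\rangle$, let $U_m$ be the two-qubit unitary acting as the identity on $|00\rangle,|11\rangle$ and as the rotation $|01\rangle\mapsto\cos\theta_m|01\rangle+\sin\theta_m|10\rangle$, $|10\rangle\mapsto-\sin\theta_m|01\rangle+\cos\theta_m|10\rangle$ with $\cos\theta_m=1/\sqrt{1+(2p^{(m)}_{00}-1)^2}$, $\sin\theta_m=(2p^{(m)}_{00}-1)/\sqrt{1+(2p^{(m)}_{00}-1)^2}$, and set $\sigma_{(m+1)}=\mathrm{tr}_B\big[U_m(\sigma_{(m)}\otimes\sigma_{(m)})U_m^\dagger\big]$ (so $\sigma_{(m)}$ consumes $2^m$ copies of $\rho$). Then for every $m$, $$M^{(1)}(\sigma_{(m)})\le\sqrt{2\,\mathrm{tr}(\rho^2)-1}.$$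
   Context: Qubit basis $\{|0\rangle,|1\rangle\}$ is the eigenbasis of $L=|1\rangle\langle1|$. The coherence measure is $M^{(1)}(\sigma):=\|\,|1\rangle\langle1|\sigma|0\rangle\langle0|\,\|_1=|\langle0|\sigma|1\rangle|$. The unitaries $U_m$ commute with $L\otimes\mathbb{I}+\mathbb{I}\otimes L$ and are the optimal two-copy coherence-concentrating unitaries for $\sigma_{(m)}$. *)

From HB Require Import structures.
From mathcomp Require Import all_boot all_order all_algebra.
From mathcomp Require Import mxtens.
Set Implicit Arguments. Unset Strict Implicit. Unset Printing Implicit Defensive.
Import Order.TTheory GRing.Theory Num.Theory.
Local Open Scope ring_scope.

(* Scalars: an arbitrary numClosedFieldType C (e.g. algC, or R[i] for R real
   closed); qubit operators are 'M[C]_2 in the basis {|0>,|1>} (ord0, ord_max),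
   two-qubit operators are 'M[C]_(2*2) with |ab> = mxtens_index (a, b), so that
   (A *t B) is the Kronecker product A (x) B. *)

Section Qubit.
Variable C : numClosedFieldType.

Definition adjmx m n (A : 'M[C]_(m, n)) : 'M[C]_(n, m) := (map_mx Num.conj A)^T.

Definition is_state n (rho : 'M[C]_n) : Prop :=
  adjmx rho = rho /\
  (forall v : 'cV[C]_n, 0 <= (adjmx v *m rho *m v) 0 0) /\
  \tr rho = 1.

Definition q0 : 'I_2 := ord0.
Definition q1 : 'I_2 := ord_max.
Definition ket (a b : 'I_2) : 'I_(2 * 2) := mxtens_index (a, b).

Definition ptraceB (X : 'M[C]_(2 * 2)) : 'M[C]_2 :=
  \matrix_(i, j) \sum_(k < 2) X (ket i k) (ket j k).

Definition Urot (c s : C) : 'M[C]_(2 * 2) :=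
  delta_mx (ket q0 q0) (ket q0 q0) + delta_mx (ket q1 q1) (ket q1 q1)
  + c *: delta_mx (ket q0 q1) (ket q0 q1) + s *: delta_mx (ket q1 q0) (ket q0 q1)
  - s *: delta_mx (ket q0 q1) (ket q1 q0) + c *: delta_mx (ket q1 q0) (ket q1 q0).

Definition cos_theta (p00 : C) : C := 1 / sqrtC (1 + (2 * p00 - 1) ^+ 2).
Definition sin_theta (p00 : C) : C := (2 * p00 - 1) / sqrtC (1 + (2 * p00 - 1) ^+ 2).

Definition U_of (sigma : 'M[C]_2) : 'M[C]_(2 * 2) :=
  Urot (cos_theta (sigma q0 q0)) (sin_theta (sigma q0 q0)).

Definition concat_step (sigma : 'M[C]_2) : 'M[C]_2 :=
  ptraceB (U_of sigma *m (sigma *t sigma) *m adjmx (U_of sigma)).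

Definition sigma_m (rho : 'M[C]_2) (m : nat) : 'M[C]_2 := iter m concat_step rho.

Definition M1 (sigma : 'M[C]_2) : C := `| sigma q0 q1 |.

End Qubit.

From HB Require Import structures.
From mathcomp Require Import all_boot all_order all_algebra.
From mathcomp Require Import mxtens.
From mathcomp Require Import ring.

Set Implicit Arguments.
Unset Strict Implicit.
Unset Printing Implicit Defensive.
Import Order.TTheory GRing.Theory Num.Theory.
Local Open Scope ring_scope.

(* A qubit state is determined by a = <0|s|0> (real) and b = <0|s|1>, and its
   squared Bloch length (2a - 1)^2 + 4|b|^2 equals 2 tr(s^2) - 1 and is at most
   1.  With x = 2a - 1, one round of the protocol maps b to b sqrt(1 + x^2) and
   a to a - 2x|b|^2 / (1 + x^2); a direct computation shows that the squared
   Bloch length does not increase.  Hence every sigma_(m) has squared Bloch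
   length at most 2 tr(rho^2) - 1, which bounds 4|b|^2 and a fortiori |b|^2. *)

Section Adjoint.
Variables (C : numClosedFieldType) (m n : nat).

Lemma adjmxD (A B : 'M[C]_(m, n)) : adjmx (A + B) = adjmx A + adjmx B.
Proof. by rewrite /adjmx map_mxD linearD. Qed.

Lemma adjmxN (A : 'M[C]_(m, n)) : adjmx (- A) = - adjmx A.
Proof. by rewrite /adjmx map_mxN linearN. Qed.

Lemma adjmxZ a (A : 'M[C]_(m, n)) : adjmx (a *: A) = a^* *: adjmx A.
Proof. by apply/matrixP => i j; rewrite !mxE rmorphM. Qed.

Lemma adjmx_delta i j : adjmx (delta_mx i j : 'M[C]_(m, n)) = delta_mx j i.
Proof. by rewrite /adjmx map_delta_mx trmx_delta. Qed.

End Adjoint.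

Lemma big_ord2 (V : nmodType) (F : 'I_2 -> V) : \sum_(k < 2) F k = F q0 + F q1.
Proof. by rewrite big_ord_recr big_ord1; congr (F _ + F _); apply: val_inj. Qed.

Lemma big_ord2x2 (V : nmodType) (F : 'I_(2 * 2) -> V) :
  \sum_(k < 2 * 2) F k = F (ket q0 q0) + F (ket q0 q1) + F (ket q1 q0) + F (ket q1 q1).
Proof.
rewrite !big_ord_recr big_ord0 /= add0r.
by congr (F _ + F _ + F _ + F _); apply: val_inj.
Qed.

Lemma eq_ket a b a' b' : (ket a b == ket a' b') = (a == a') && (b == b').
Proof. by rewrite (can_eq (@mxtens_indexK 2 2)) xpair_eqE. Qed.

Section NumField.
Variable F : numFieldType.

Lemma real_2x_sub1 (a : F) : a \is Num.real -> 2 * a - 1 \is Num.real.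
Proof. by move=> aR; rewrite rpredB ?rpredM ?realn ?rpred1. Qed.

Lemma add1sqr_gt0 (x : F) : x \is Num.real -> 0 < 1 + x ^+ 2.
Proof. by move=> xR; rewrite ltr_wpDr // -realEsqr. Qed.

Lemma bloch_update_le (x B : F) : x \is Num.real -> 0 <= B -> x ^+ 2 + 4 * B <= 1 ->
  (x - 4 * x * B / (1 + x ^+ 2)) ^+ 2 + 4 * (B * (1 + x ^+ 2)) <= x ^+ 2 + 4 * B.
Proof.
move=> xR B_ge0 le1.
have x2_ge0 : 0 <= x ^+ 2 by rewrite -realEsqr.
have D_gt0 := add1sqr_gt0 xR.
have x2_le1 : x ^+ 2 <= 1 by apply: le_trans le1; rewrite lerDl mulr_ge0.
have x4_le_x2 : x ^+ 2 ^+ 2 <= x ^+ 2 by rewrite expr2 ler_piMr.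
(* the decrease is x^2 * 4B * (1 - 4B - x^4) / (1 + x^2)^2 *)
have -> : (x - 4 * x * B / (1 + x ^+ 2)) ^+ 2 + 4 * (B * (1 + x ^+ 2)) =
    x ^+ 2 + 4 * B + x ^+ 2 * (4 * B / (1 + x ^+ 2)) * ((4 * B + x ^+ 2 ^+ 2 - 1) / (1 + x ^+ 2)).
  by field; rewrite gt_eqF.
have B4_ge0 : 0 <= 4 * B by rewrite mulr_ge0.
rewrite gerDl; apply: mulr_ge0_le0; first by rewrite mulr_ge0 // divr_ge0 // ltW.
apply: mulr_le0_ge0; last by rewrite invr_ge0 ltW.
by rewrite subr_le0; apply: le_trans le1; rewrite [_ + 4 * B]addrC lerD2l.
Qed.

End NumField.

Section Qubit.
Variable C : numClosedFieldType.
Implicit Types (sigma rho : 'M[C]_2) (c s : C).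

Lemma adjmx_Urot c s : c \is Num.real -> s \is Num.real -> adjmx (Urot c s) = Urot c (- s).
Proof.
move=> /conj_Creal cR /conj_Creal sR.
rewrite /Urot !(adjmxD, adjmxN, adjmxZ, adjmx_delta) cR sR !scaleNr opprK -!addrA.
by congr (_ + (_ + (_ + _))); rewrite addrCA.
Qed.

Definition rot_step c s sigma := ptraceB (Urot c s *m (sigma *t sigma) *m Urot c (- s)).

Lemma rot_stepE c s (t : 'M[C]_2) (S := rot_step c s t) :
  [/\ S q0 q0 = t q0 q0 ^+ 2 + t q0 q0 * t q1 q1 * (c ^+ 2 + s ^+ 2)
                - 2 * c * s * (t q0 q1 * t q1 q0),
      S q1 q1 = t q1 q1 ^+ 2 + t q0 q0 * t q1 q1 * (c ^+ 2 + s ^+ 2)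
                + 2 * c * s * (t q0 q1 * t q1 q0),
      S q0 q1 = t q0 q1 * (t q0 q0 * (c + s) + t q1 q1 * (c - s))
    & S q1 q0 = t q1 q0 * (t q0 q0 * (c + s) + t q1 q1 * (c - s))].
Proof.
by split; rewrite /S /rot_step /ptraceB /Urot mxE big_ord2 !mxE !big_ord2x2 !mxE
  !big_ord2x2 !mxE !eq_ket /ket !mxtens_indexK /=; ring.
Qed.

Lemma concat_stepE sigma : sigma q0 q0 \is Num.real ->
  concat_step sigma = rot_step (cos_theta (sigma q0 q0)) (sin_theta (sigma q0 q0)) sigma.
Proof.
move=> /real_2x_sub1 xR; have qR := sqrtC_real (ltW (add1sqr_gt0 xR)).
by rewrite /concat_step /U_of adjmx_Urot // rpredM ?rpredV ?rpred1.
Qed.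

Definition qubit_form sigma :=
  [/\ sigma q0 q0 \is Num.real, sigma q1 q1 = 1 - sigma q0 q0 & sigma q1 q0 = (sigma q0 q1)^*].

Definition bloch_sq sigma := (2 * sigma q0 q0 - 1) ^+ 2 + 4 * `|sigma q0 q1| ^+ 2.

Lemma concat_step_entries sigma (a := sigma q0 q0) (b := sigma q0 q1)
    (x := 2 * a - 1) (S := concat_step sigma) :
  qubit_form sigma ->
  [/\ S q0 q0 = a - 2 * x * `|b| ^+ 2 / (1 + x ^+ 2), S q1 q1 = 1 - S q0 q0,
      S q0 q1 = b * sqrtC (1 + x ^+ 2) & S q1 q0 = (S q0 q1)^*].
Proof.
move=> [aR d_eq b'_eq].
have xR : x \is Num.real := real_2x_sub1 aR.
have D_gt0 := add1sqr_gt0 xR.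
set q := sqrtC (1 + x ^+ 2).
have q_gt0 : 0 < q by rewrite sqrtC_gt0.
have q_neq0 : q != 0 by rewrite gt_eqF.
have q2 : q ^+ 2 = 1 + x ^+ 2 by rewrite sqrtCK.
have c2s2 : (1 / q) ^+ 2 + (x / q) ^+ 2 = 1.
  transitivity ((1 + x ^+ 2) / q ^+ 2); first by field.
  by rewrite -q2 divff // expf_neq0.
have cs : 2 * (1 / q) * (x / q) = 2 * x / (1 + x ^+ 2).
  by rewrite -q2; field.
have cxs : a * (1 / q + x / q) + (1 - a) * (1 / q - x / q) = q.
  transitivity ((1 + x ^+ 2) / q); first by rewrite /x; field.
  by rewrite -q2 expr2 mulfK.
have bb : b * b^* = `|b| ^+ 2 by rewrite normCK.
have [e00 e11 e01 e10] := rot_stepE (1 / q) (x / q) sigma.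
rewrite /S concat_stepE // /cos_theta /sin_theta -/a -/x -/q.
rewrite e00 e11 e01 e10 d_eq b'_eq -/a -/b c2s2 cs cxs bb.
have D_neq0 : 1 + x ^+ 2 != 0 by rewrite gt_eqF.
split=> //; [by field | by field |].
by rewrite rmorphM /= (conj_Creal (gtr0_real q_gt0)).
Qed.

Lemma qubit_form_concat_step sigma : qubit_form sigma -> qubit_form (concat_step sigma).
Proof.
move=> sq; have [aR _ _] := sq; have [e00 e11 _ e10] := concat_step_entries sq.
split=> //; rewrite e00.
by rewrite ?(rpredB, rpredM, rpredV, rpredD, rpredX, normr_real, realn, rpred1).
Qed.

Lemma bloch_sq_concat_step sigma : qubit_form sigma -> bloch_sq sigma <= 1 ->
  bloch_sq (concat_step sigma) <= bloch_sq sigma.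
Proof.
move=> sq le1; have [aR _ _] := sq; have [e00 _ e01 _] := concat_step_entries sq.
move: le1; rewrite /bloch_sq e00 e01; set x := 2 * _ - 1; set B := `|_| ^+ 2 => le1.
have D_gt0 := add1sqr_gt0 (real_2x_sub1 aR).
rewrite normrM [`|sqrtC _|]ger0_norm ?sqrtC_ge0 ?(ltW D_gt0) // exprMn sqrtCK -/B.
have -> : 2 * (sigma q0 q0 - 2 * x * B / (1 + x ^+ 2)) - 1 = x - 4 * x * B / (1 + x ^+ 2).
  by rewrite /x; field; rewrite -/x gt_eqF.
by rewrite bloch_update_le ?real_2x_sub1 ?exprn_ge0.
Qed.

Lemma bloch_sqE rho : qubit_form rho -> bloch_sq rho = 2 * \tr (rho *m rho) - 1.
Proof.
move=> [_ d_eq b'_eq]; rewrite /bloch_sq /mxtrace big_ord2 !mxE !big_ord2.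
by rewrite d_eq b'_eq [_^* * _]mulrC -normCK; ring.
Qed.

Definition col2 (u w : C) : 'cV[C]_2 := \col_i (if i == q0 then u else w).

Lemma quad_form_col2 rho u w : (adjmx (col2 u w) *m rho *m col2 u w) 0 0 =
  u^* * (rho q0 q0 * u + rho q0 q1 * w) + w^* * (rho q1 q0 * u + rho q1 q1 * w).
Proof. by rewrite /adjmx !mxE big_ord2 !mxE !big_ord2 !mxE /=; ring. Qed.

Lemma state_qubit_form rho : is_state rho -> qubit_form rho.
Proof.
move=> [rho_herm [_ tr1]].
have hermE i j : rho i j = (rho j i)^* by rewrite -{1}rho_herm !mxE.
split; first by apply/CrealP; rewrite -hermE.
  by move: tr1; rewrite /mxtrace big_ord2 => <-; ring.
exact: hermE.
Qed.

Lemma bloch_sq_state_le1 rho : is_state rho -> bloch_sq rho <= 1.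
Proof.
move=> st; have [_ [rho_psd _]] := st; have [aR d_eq b'_eq] := state_qubit_form st.
rewrite /bloch_sq; move: aR d_eq b'_eq.
set a := rho q0 q0; set b := rho q0 q1 => aR d_eq b'_eq.
have conjN (z : C) : (- z)^* = - z^* by exact: rmorphN.
have a_conj : a^* = a := conj_Creal aR.
have a1_conj : (1 - a)^* = 1 - a by apply: conj_Creal; rewrite rpredB ?rpred1.
(* v1^* rho v1 and v2^* rho v2 are (1 - a) det rho and a det rho *)
set v1 := col2 (1 - a) (- b^*); set v2 := col2 b (- a).
have det_eq : (adjmx v1 *m rho *m v1) 0 0 + (adjmx v2 *m rho *m v2) 0 0 = a * (1 - a) - b * b^*.
  by rewrite !quad_form_col2 -/a -/b d_eq b'_eq !conjN a_conj a1_conj conjCK; ring.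
have det_ge0 : 0 <= a * (1 - a) - b * b^* by rewrite -det_eq addr_ge0.
have -> : (2 * a - 1) ^+ 2 + 4 * `|b| ^+ 2 = 1 - 4 * (a * (1 - a) - b * b^*).
  by rewrite normCK; ring.
by rewrite gerBl mulr_ge0.
Qed.

Lemma M1_le_sqrtC sigma R : sigma q0 q0 \is Num.real -> bloch_sq sigma <= R ->
  M1 sigma <= sqrtC R.
Proof.
move=> aR le_R.
have b2_ge0 : 0 <= `|sigma q0 q1| ^+ 2 by rewrite exprn_ge0.
have b2_le : `|sigma q0 q1| ^+ 2 <= R.
  apply: le_trans le_R; apply: ler_wpDl; first by rewrite -realEsqr real_2x_sub1.
  by rewrite ler_peMl // ler1n.
rewrite /M1 -(sqrCK (normr_ge0 (sigma q0 q1))) ler_sqrtC // nnegrE //.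
exact: le_trans b2_le.
Qed.

Lemma sigma_m_bloch_sq rho m : is_state rho ->
  qubit_form (sigma_m rho m) /\ bloch_sq (sigma_m rho m) <= bloch_sq rho.
Proof.
move=> st; elim: m => [|m [sq le_rho]]; first by split; [exact: state_qubit_form |].
have le1 := le_trans le_rho (bloch_sq_state_le1 st).
split; first exact: qubit_form_concat_step.
exact: le_trans (bloch_sq_concat_step sq le1) le_rho.
Qed.

End Qubit.

Theorem mainTheorem3 (C : numClosedFieldType) (rho : 'M[C]_2) :
  is_state rho ->
  forall m : nat, M1 (sigma_m rho m) <= sqrtC (2 * \tr (rho *m rho) - 1).
Proof.
move=> st m; have [[aR _ _] le_rho] := sigma_m_bloch_sq m st.
rewrite -bloch_sqE; [exact: M1_le_sqrtC aR le_rho | exact: state_qubit_form].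
Qed.
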